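(* Let $n\ge1$ and let $\mathcal{C}$ be the binary $[2^n-1,n]$ simplex code. Then $\mathcal{C}$ is a functional $(s,2^{n-1})$-batch code for every integer $s$ with $1\le s\le\min\{4,2^{n-1}\}$.
   Context: The binary $[2^n-1,n]$ simplex code is the binary linear code whose $n\times(2^n-1)$ generator matrix $\mathbf{G}=[\mathbf{g}_1,\dots,\mathbf{g}_{2^n-1}]$ has as columns all nonzero vectors of $\mathbb{F}_2^n$ (each exactly once). A binary linear code with generator matrix $\mathbf{G}=[\mathbf{g}_1,\dots,\mathbf{g}_N]\in\mathbb{F}_2^{n\times N}$ with nonzero columns is a functional $(s,t)$-batch code ($1\le s\le t$) if for every multiset of request vectors $I=\{\mathbf{v}_1^{(a_1)},\dots,\mathbf{v}_s^{(a_s)}\}$, i.e. nonzero vectors $\mathbf{v}_1,\dots,\mathbf{v}_s\in\mathbb{F}_2^n$ (not necessarily distinct) with multiplicities $a_i\ge1$ and $\sum_i a_i=t$, there exist $t$ pairwise disjoint sets $R_{i,j}\subseteq[N]$ ($i\in[s]$, $j\in[a_i]$) with $\sum_{l\in R_{i,j}}\mathbf{g}_l=\mathbf{v}_i$ for all $i,j$. *)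

From HB Require Import structures.
From mathcomp Require Import all_boot all_order all_algebra.
Set Implicit Arguments. Unset Strict Implicit. Unset Printing Implicit Defensive.
Import GRing.Theory.
Local Open Scope ring_scope.

(* G is a generator matrix of the binary [2^n-1, n] simplex code:
   N = 2^n - 1 columns, all nonzero, pairwise distinct (hence each
   nonzero vector of F_2^n occurs exactly once). *)
Definition is_simplex_generator (n N : nat) (G : 'M['F_2]_(n, N)) : Prop :=
  N = (2 ^ n - 1)%N /\
  (forall l : 'I_N, col l G != 0) /\
  injective (fun l : 'I_N => col l G).

Definition functional_batch_code (n N : nat) (G : 'M['F_2]_(n, N))
    (s t : nat) : Prop :=
  forall (v : 'I_s -> 'cV['F_2]_n) (a : 'I_s -> nat),
    (forall i, v i != 0) ->
    (forall i, (1 <= a i)%N) ->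
    (\sum_(i < s) a i)%N = t ->
    exists R : 'I_s -> nat -> {set 'I_N},
      (forall (i : 'I_s) (j : nat), (j < a i)%N ->
          \sum_(l in R i j) col l G = v i) /\
      (forall (i i' : 'I_s) (j j' : nat), (j < a i)%N -> (j' < a i')%N ->
          (i, j) != (i', j') -> [disjoint R i j & R i' j']).

From mathcomp Require Import all_boot all_order all_algebra zify.
Set Implicit Arguments. Unset Strict Implicit. Unset Printing Implicit Defensive.
Import GRing.Theory.
Local Open Scope ring_scope.

(* The columns of a simplex generator are exactly the nonzero vectors of
   F_2^n, so a batch recovery is a family of pairwise disjoint sets of nonzero
   vectors with prescribed sums.  Such families are built by induction on
   n = 1 + k, for at most four requests of total multiplicity 2^k.  If all
   requests lie in a hyperplane H, the two largest requests receive 2^(k-1)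
   recovery sets of even size in the complement of H (an even-size set there
   sums into H, so this is again a problem in dimension k, solved by a second
   induction), and the other 2^(k-1) recoveries take place inside H by
   induction.  Otherwise the requests span F_2^n; since some request has
   multiplicity at least 2, this forces n = 3 or 4 with the requests a basis,
   and the few possible multiplicity patterns are settled by explicit
   certificates checked by computation. *)

Notation F2 := 'F_2.

Lemma F2_addxx (a : F2) : a + a = 0.
Proof. by rewrite (addrr_pchar2 (pchar_Fp _)). Qed.

Lemma F2mx_addxx m n (A : 'M[F2]_(m, n)) : A + A = 0.
Proof. by apply/matrixP=> i j; rewrite !mxE F2_addxx. Qed.

Lemma F2_neq0 (a : F2) : a != 0 -> a = 1.
Proof. by case: a => [[|[|//]]] //= lt _; apply/val_inj. Qed.

Lemma mx11_F2_neq0 (t : 'M[F2]_1) : t != 0 -> t = 1%:M.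
Proof.
move=> nz; rewrite [t]mx11_scalar (F2_neq0 (a := t 0 0)) //.
by apply: contraNneq nz => t0; rewrite [t]mx11_scalar t0 raddf0.
Qed.

Lemma mx11_F2_1_neq0 : (1%:M : 'M[F2]_1) != 0.
Proof. exact: (oner_neq0 [the nzRingType of 'M[F2]_1]). Qed.

Lemma card_cV_F2 n : #|{: 'cV[F2]_n}| = (2 ^ n)%N.
Proof. by rewrite card_mx card_Fp // muln1. Qed.

Lemma sumr_F2_even (T : finType) (S : {set T}) m n (A : 'M[F2]_(m, n)) :
  ~~ odd #|S| -> \sum_(x in S) A = 0.
Proof.
move=> ev; rewrite sumr_const -[#|S|]odd_double_half (negbTE ev) add0n.
by rewrite -mul2n mulrnA mulr2n F2mx_addxx mul0rn.
Qed.

(** * Recovery families *)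

Lemma leq_sum_subpred (I : finType) (P1 P2 : pred I) (F : I -> nat) i :
  subpred P1 P2 -> P2 i -> ~~ P1 i ->
  (\sum_(x | P1 x) F x + F i <= \sum_(x | P2 x) F x)%N.
Proof.
move=> sub P2i nP1i; rewrite (bigD1 i P2i) /= addnC leq_add2l.
rewrite [X in (_ <= X)%N](bigID P1) /=; apply: leq_trans (leq_addr _ _).
apply: eq_leq; apply: eq_bigl => x; apply/idP/idP=> [P1x|/andP[/andP[]]//].
by rewrite P1x sub //= andbT; apply: contraNneq nP1i => <-.
Qed.

Definition recovers n s (P : pred {set 'cV[F2]_n}) (v : 'I_s -> 'cV[F2]_n)
    (a : 'I_s -> nat) :=
  exists R : 'I_s -> nat -> {set 'cV[F2]_n},
    (forall i j, (j < a i)%N -> P (R i j) /\ \sum_(x in R i j) x = v i) /\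
    (forall i i' j j', (j < a i)%N -> (j' < a i')%N -> (i, j) != (i', j') ->
       [disjoint R i j & R i' j']).

Section Recovers.
Variables (n : nat) (P : pred {set 'cV[F2]_n}).

Lemma eq_recovers s (v : 'I_s -> 'cV[F2]_n) (a a' : 'I_s -> nat) :
  a =1 a' -> recovers P v a -> recovers P v a'.
Proof.
move=> e [R [RP Rd]]; exists R; split=> [i j|i i' j j']; rewrite -!e; [exact: RP|exact: Rd].
Qed.

(* The recovery sets of [v' r] are cut into consecutive blocks, one for each
   request in the fibre of [r]. *)
Lemma recovers_pullback s s' (v : 'I_s -> 'cV[F2]_n) (a : 'I_s -> nat)
    (v' : 'I_s' -> 'cV[F2]_n) (a' : 'I_s' -> nat) (h : 'I_s -> 'I_s') :
  (forall i, (0 < a i)%N -> v i = v' (h i)) ->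
  (forall r, (\sum_(i | h i == r) a i <= a' r)%N) ->
  recovers P v' a' -> recovers P v a.
Proof.
move=> hv ha [R' [R'P R'd]].
pose off (i : 'I_s) := (\sum_(i' : 'I_s | (i' < i)%N && (h i' == h i)) a i')%N.
have off_le (i : 'I_s) : (off i + a i <= a' (h i))%N.
  apply: leq_trans (ha (h i)); apply: leq_sum_subpred => [x /andP[] //||] /=.
    by rewrite eqxx.
  by rewrite ltnn.
have off_lt (i i' : 'I_s) : (i < i')%N -> h i = h i' -> (off i + a i <= off i')%N.
  move=> lt hh; rewrite /off -hh; apply: leq_sum_subpred => [x /andP[lx ->]||] /=.
  - by rewrite andbT (ltn_trans lx lt).
  - by rewrite lt eqxx.
  - by rewrite ltnn.
have in_range (i : 'I_s) j : (j < a i)%N -> (off i + j < a' (h i))%N.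
  by move=> lj; apply: leq_trans (off_le i); rewrite ltn_add2l.
exists (fun i j => R' (h i) (off i + j)); split.
  move=> i j lj; have [PR ->] := R'P _ _ (in_range i j lj).
  by rewrite -hv //; apply: leq_ltn_trans lj.
move=> i i' j j' lj lj' ne; apply: R'd; rewrite ?in_range //.
apply: contraNneq ne => -[hh e]; have [lt|gt|/val_inj eq] := ltngtP i i'.
- by have := off_lt _ _ lt hh; lia.
- by have := off_lt _ _ gt (esym hh); lia.
- by subst i'; rewrite xpair_eqE eqxx /=; apply/eqP; lia.
Qed.

Lemma recovers_one s (v : 'I_s -> 'cV[F2]_n) a i0 (t : nat) :
  (forall i, i != i0 -> a i = 0%N) -> (a i0 <= t)%N ->
  recovers P (fun _ : 'I_1 => v i0) (fun _ => t) -> recovers P v a.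
Proof.
move=> a0 ai0t; apply: (recovers_pullback (h := fun _ => ord0)) => [i|r].
  by have [->|/a0->] := eqVneq i i0.
rewrite (eq_bigl xpredT) => [|i]; last by rewrite [r]ord1 eqxx.
by rewrite (bigD1 i0) //= big1 ?addn0.
Qed.

Lemma recovers_image m s (P' : pred {set 'cV[F2]_m}) (f : 'cV[F2]_n -> 'cV[F2]_m)
    (v : 'I_s -> 'cV[F2]_n) (w : 'I_s -> 'cV[F2]_m) a :
  injective f -> (forall S, P S -> P' (f @: S)) ->
  (forall i S, (0 < a i)%N -> P S -> \sum_(x in S) x = v i ->
     \sum_(x in S) f x = w i) ->
  recovers P v a -> recovers P' w a.
Proof.
move=> finj fP fsum [R [RP Rd]]; exists (fun i j => f @: R i j); split.
  move=> i j lj; have [PR sR] := RP i j lj; split; first exact: fP.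
  rewrite big_imset /=; last by move=> x y _ _; apply: finj.
  by apply: fsum PR sR; apply: leq_ltn_trans lj.
by move=> i i' j j' lj lj' ne; rewrite imset_disjoint //; apply: Rd.
Qed.

Lemma recovers_add s (X Y : {set 'cV[F2]_n}) (v : 'I_s -> 'cV[F2]_n) (a1 a2 : 'I_s -> nat) :
  [disjoint X & Y] ->
  recovers (fun S => P S && (S \subset X)) v a1 ->
  recovers (fun S => P S && (S \subset Y)) v a2 ->
  recovers P v (fun i => a1 i + a2 i)%N.
Proof.
move=> dXY [R1 [R1P R1d]] [R2 [R2P R2d]].
have sub1 i j : (j < a1 i)%N -> R1 i j \subset X by case/R1P=> /andP[].
have sub2 i j : (j < a2 i)%N -> R2 i j \subset Y by case/R2P=> /andP[].
exists (fun i j => if (j < a1 i)%N then R1 i j else R2 i (j - a1 i)%N); split.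
  move=> i j lj; case: ifP => lj1; first by have [/andP[]] := R1P i j lj1.
  by have [/andP[]] := R2P i (j - a1 i)%N ltac:(lia).
move=> i i' j j' lj lj' ne.
case: (ltnP j (a1 i)) => l1; case: (ltnP j' (a1 i')) => l2.
- exact: R1d.
- exact: disjointWl (sub1 _ _ l1) (disjointWr (sub2 i' (j' - a1 i')%N ltac:(lia)) dXY).
- rewrite disjoint_sym in dXY.
  exact: disjointWl (sub2 i (j - a1 i)%N ltac:(lia)) (disjointWr (sub1 _ _ l2) dXY).
- apply: R2d; [lia|lia|].
  by apply: contraNneq ne => -[ii' e]; subst i'; rewrite xpair_eqE eqxx /=; apply/eqP; lia.
Qed.

End Recovers.

Definition cols_mx (F : fieldType) n m (x : 'I_m -> 'cV[F]_n) : 'M[F]_(n, m) :=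
  \matrix_(i, r) x r i 0.

Lemma col_cols_mx (F : fieldType) n m (x : 'I_m -> 'cV[F]_n) r : col r (cols_mx x) = x r.
Proof. by apply/matrixP=> i j; rewrite !mxE ord1. Qed.

Lemma annihilator_of_rank_lt (F : fieldType) n m (x : 'I_m -> 'cV[F]_n) :
  (\rank (cols_mx x) < n)%N -> exists2 phi : 'rV[F]_n, phi != 0 & forall r, phi *m x r = 0.
Proof.
move=> rk; have [i nzi] : exists i, row i (kermx (cols_mx x)) != 0.
  apply/existsP; apply: contraTT rk; rewrite negb_exists -leqNgt => /forallP K0.
  have ker0 : kermx (cols_mx x) = 0.
    by apply/row_matrixP => i; rewrite row0; apply/eqP; move: (K0 i); rewrite negbK.
  by rewrite -subn_eq0 -mxrank_ker ker0 mxrank0.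
exists (row i (kermx (cols_mx x))) => // r.
by rewrite -col_cols_mx colE mulmxA -row_mul mulmx_ker row0 mul0mx.
Qed.

Lemma rank_lt_of_dependent (F : fieldType) n m (x : 'I_m -> 'cV[F]_n) (e : {set 'I_m}) :
  e != set0 -> \sum_(r in e) x r = 0 -> (\rank (cols_mx x) < m)%N.
Proof.
move=> ne xe0; rewrite -mxrank_tr ltnNge row_leq_rank; apply/negP => free.
pose c : 'cV[F]_m := \col_r (r \in e)%:R.
have cx : cols_mx x *m c = 0.
  rewrite -xe0; apply/matrixP => i j; rewrite !mxE summxE [RHS]big_mkcond /=.
  by apply: eq_bigr => r _; rewrite !mxE ord1; case: (r \in e); rewrite ?mulr1 ?mulr0.
have := mulmx_free_eq0 c^T free; rewrite -trmx_mul cx trmx0 eqxx => /esym/eqP c0.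
have [r re] := set0Pn _ ne.
by move/matrixP: c0 => /(_ 0 r); rewrite !mxE re => /eqP; rewrite oner_eq0.
Qed.

Lemma exists_rV_mul_neq0 (R : nzRingType) n (w : 'cV[R]_n) :
  w != 0 -> exists phi : 'rV[R]_n, phi *m w != 0.
Proof.
move=> nz; have [i wi] : exists i, row i w != 0.
  apply/existsP; apply: contraNT nz; rewrite negb_exists => /forallP w0.
  by apply/eqP/row_matrixP => i; rewrite row0; apply/eqP; move: (w0 i); rewrite negbK.
by exists (delta_mx 0 i); rewrite -rowE.
Qed.

Lemma row_unitmx_extension k (phi : 'rV[F2]_(1 + k)) : phi != 0 ->
  exists2 E : 'M[F2]_(1 + k), E \in unitmx & forall x : 'cV_(1 + k), usubmx (E *m x) = phi *m x.
Proof.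
move=> nz; exists (row_ebase phi); first exact: row_ebase_unit.
have e := mulmx_ebase phi; rewrite rank_rV nz /= in e.
have C1 : col_ebase phi = 1%:M.
  apply: mx11_F2_neq0; apply: contraTneq (col_ebase_unit phi) => ->.
  by rewrite unitmxE det0 unitr0.
rewrite C1 mul1mx pid_mx_row -[row_ebase phi]vsubmxK mul_row_col mul0mx addr0 mul1mx in e.
by move=> x; rewrite -mul_usub_mx e.
Qed.

Lemma recovers_top_row k s (P : pred {set 'cV[F2]_(1 + k)}) (v : 'I_s -> 'cV[F2]_(1 + k)) a
    (phi : 'rV[F2]_(1 + k)) :
  (forall (E : 'M_(1 + k)) S, E \in unitmx -> P S -> P (mulmx (invmx E) @: S)) -> phi != 0 ->
  (forall E, E \in unitmx -> (forall x : 'cV_(1 + k), usubmx (E *m x) = phi *m x) ->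
     recovers P (fun i => E *m v i) a) ->
  recovers P v a.
Proof.
move=> PE nz hE; have [E uE Ephi] := row_unitmx_extension nz.
apply: (recovers_image (f := mulmx (invmx E))) (hE E uE Ephi).
- by move=> x y /(congr1 (mulmx E)); rewrite !mulKVmx.
- by move=> S; apply: PE.
- by move=> i S _ _ Sv; rewrite -mulmx_sumr Sv mulKmx.
Qed.

(** * Constructions in the two halves of F_2^(1+k) *)

Definition even_set n (S : {set 'cV[F2]_n}) := ~~ odd #|S|.
Definition zero_free n (S : {set 'cV[F2]_n}) := 0 \notin S.

Lemma even_set_unitmx n (E : 'M[F2]_n) S :
  E \in unitmx -> even_set S -> even_set (mulmx (invmx E) @: S).
Proof. by move=> uE; rewrite /even_set card_imset //; apply: can_inj (mulKVmx uE). Qed.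

Lemma zero_free_unitmx n (E : 'M[F2]_n) S :
  E \in unitmx -> zero_free S -> zero_free (mulmx (invmx E) @: S).
Proof.
move=> uE; apply: contra => /imsetP[x xS /(congr1 (mulmx E))].
by rewrite mulmx0 mulKVmx // => ->.
Qed.

Lemma col_mx_eqE (R : eqType) m1 m2 n (A1 B1 : 'M[R]_(m1, n)) (A2 B2 : 'M[R]_(m2, n)) :
  (col_mx A1 A2 == col_mx B1 B2) = (A1 == B1) && (A2 == B2).
Proof. by apply/eqP/andP => [/eq_col_mx[-> ->]|[/eqP-> /eqP->]]. Qed.

Lemma sum_col_mx (V : nmodType) (I : finType) (A : pred I) k1 k2
    (f : I -> 'cV[V]_k1) (g : I -> 'cV[V]_k2) :
  \sum_(i in A) col_mx (f i) (g i) = col_mx (\sum_(i in A) f i) (\sum_(i in A) g i).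
Proof.
elim/big_rec3: _ => [|i x y z _ ->]; first by rewrite col_mx0.
by rewrite add_col_mx.
Qed.

Lemma zero_free_col_mx0 k (S : {set 'cV[F2]_k}) :
  zero_free S -> zero_free [set col_mx (0 : 'cV_1) x | x in S].
Proof.
apply: contra => /imsetP[x xS /eqP]; rewrite -col_mx0 col_mx_eqE => /andP[_ /eqP x0].
by rewrite x0.
Qed.

Lemma zero_free_col_mx1 k (S : {set 'cV[F2]_k}) : zero_free [set col_mx 1%:M x | x in S].
Proof.
apply/imsetP => -[x _ /eqP]; rewrite -col_mx0 col_mx_eqE eq_sym.
by rewrite (negbTE mx11_F2_1_neq0).
Qed.

Section CosetPairs.
Variables (k : nat) (u : 'cV[F2]_k).

Definition coset_pair (y : 'cV[F2]_k) : {set 'cV[F2]_(1 + k)} :=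
  [set col_mx 0 y; col_mx 1%:M (y + u)].

Lemma card_coset_pair y : #|coset_pair y| = 2.
Proof. by rewrite cards2 col_mx_eqE eq_sym (negbTE mx11_F2_1_neq0). Qed.

Lemma sum_coset_pair y : \sum_(x in coset_pair y) x = col_mx 1%:M u.
Proof.
rewrite big_setU1 /= ?big_set1; last by rewrite inE col_mx_eqE eq_sym (negbTE mx11_F2_1_neq0).
by rewrite add_col_mx add0r addrA F2mx_addxx add0r.
Qed.

Lemma zero_free_coset_pair y : y != 0 -> zero_free (coset_pair y).
Proof.
move=> nz; rewrite /zero_free !inE -col_mx0 !col_mx_eqE eqxx /=.
by rewrite [0 == y]eq_sym (negbTE nz) [0 == _]eq_sym (negbTE mx11_F2_1_neq0).
Qed.

Lemma disjoint_coset_pair y z : y != z -> [disjoint coset_pair y & coset_pair z].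
Proof.
move=> yz; rewrite -setI_eq0; apply/eqP/setP => x; rewrite !inE.
apply/negbTE; apply/negP => /andP[].
have n01 : (0 : 'cV[F2]_1) == 1%:M = false by rewrite eq_sym (negbTE mx11_F2_1_neq0).
case/orP=> /eqP->; rewrite !col_mx_eqE ?n01 ?(negbTE mx11_F2_1_neq0) !eqxx /=.
- by rewrite (negbTE yz).
- by rewrite (can_eq (addrK u)) (negbTE yz).
Qed.

Lemma disjoint_coset_pair1 y : y != 0 -> [disjoint [set col_mx 1%:M u] & coset_pair y].
Proof.
move=> nz; rewrite disjoints1 !inE !col_mx_eqE (negbTE mx11_F2_1_neq0) eqxx /=.
by rewrite -[u in u == _]add0r (can_eq (addrK u)) eq_sym.
Qed.

End CosetPairs.

Lemma recovers_single_of_top k (P : pred {set 'cV[F2]_(1 + k)}) t :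
  (forall (E : 'M_(1 + k)) S, E \in unitmx -> P S -> P (mulmx (invmx E) @: S)) ->
  (forall u : 'cV_k, recovers P (fun _ : 'I_1 => col_mx 1%:M u) (fun _ => t)) ->
  forall w, w != 0 -> recovers P (fun _ : 'I_1 => w) (fun _ => t).
Proof.
move=> PE top w nz; have [phi phiw] := exists_rV_mul_neq0 nz.
have nzphi : phi != 0 by apply: contraNneq phiw => ->; rewrite mul0mx.
apply: (recovers_top_row PE nzphi) => E uE Ephi.
have /mx11_F2_neq0 top1 : usubmx (E *m w) != 0 by rewrite Ephi.
by rewrite -[E *m w]vsubmxK top1; apply: top.
Qed.

Lemma recovers_even_single k (w : 'cV[F2]_(1 + k)) : w != 0 ->
  recovers (@even_set (1 + k)) (fun _ : 'I_1 => w) (fun _ => 2 ^ k)%N.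
Proof.
apply: recovers_single_of_top => [E S|u]; first exact: even_set_unitmx.
exists (fun _ j => coset_pair u (nth 0 (enum 'cV[F2]_k) j)); split.
  by move=> i j _; rewrite /even_set card_coset_pair sum_coset_pair.
move=> i i' j j' lj lj' ne; apply: disjoint_coset_pair.
rewrite nth_uniq ?enum_uniq -?cardE ?card_cV_F2 //.
by apply: contraNneq ne => ->; rewrite [i]ord1 [i']ord1.
Qed.

(* The request itself, then [2^k - 1] pairs avoiding [0]. *)
Lemma recovers_zero_free_single k (w : 'cV[F2]_(1 + k)) : w != 0 ->
  recovers (@zero_free (1 + k)) (fun _ : 'I_1 => w) (fun _ => 2 ^ k)%N.
Proof.
apply: recovers_single_of_top => [E S|u]; first exact: zero_free_unitmx.
pose ys := enum [set~ (0 : 'cV[F2]_k)].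
have size_ys : size ys = (2 ^ k).-1 by rewrite -cardE cardsC1 card_cV_F2.
have ys_lt j : (j.+1 < 2 ^ k)%N -> (j < size ys)%N by rewrite size_ys; lia.
have ys_neq0 j : (j.+1 < 2 ^ k)%N -> nth 0 ys j != 0.
  by move/ys_lt/(mem_nth 0); rewrite mem_enum !inE.
exists (fun _ j => if j is j'.+1 then coset_pair u (nth 0 ys j') else [set col_mx 1%:M u]).
split=> [i [|j] lj|i i' [|j] [|j'] lj lj' ne].
- rewrite big_set1 /zero_free inE eq_sym -col_mx0 col_mx_eqE.
  by rewrite (negbTE mx11_F2_1_neq0).
- by rewrite sum_coset_pair zero_free_coset_pair ?ys_neq0.
- by move: ne; rewrite [i]ord1 [i']ord1 eqxx.
- exact/disjoint_coset_pair1/ys_neq0.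
- by rewrite disjoint_sym; apply/disjoint_coset_pair1/ys_neq0.
- apply: disjoint_coset_pair; rewrite nth_uniq ?enum_uniq ?ys_lt //.
  by apply: contraNneq ne => -[->]; rewrite [i]ord1 [i']ord1.
Qed.

(* Even-size sets in the coset [x_0 = 1] sum into the hyperplane [x_0 = 0]. *)
Lemma recovers_halves k s (P : pred {set 'cV[F2]_(1 + k)}) (Pl : pred {set 'cV[F2]_k})
    (v : 'I_s -> 'cV[F2]_(1 + k)) (w : 'I_s -> 'cV[F2]_k) (c d : 'I_s -> nat) :
  (forall i, v i = col_mx 0 (w i)) ->
  (forall S, Pl S -> P [set col_mx 0 x | x in S]) ->
  (forall S, even_set S -> P [set col_mx 1%:M x | x in S]) ->
  recovers Pl w c -> recovers (@even_set k) w d -> recovers P v (fun i => c i + d i)%N.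
Proof.
move=> vw Pl0 Pev1 Rc Rd.
pose X := [set x : 'cV[F2]_(1 + k) | usubmx x == 0].
apply: (@recovers_add _ _ _ X (~: X)); first by rewrite -subsets_disjoint.
- apply: (recovers_image (f := col_mx 0)) Rc.
  + by move=> x y /eq_col_mx[].
  + move=> S PlS; rewrite Pl0 //=; apply/subsetP => _ /imsetP[y _ ->].
    by rewrite inE col_mxKu.
  + by move=> i S _ _ Sw; rewrite vw sum_col_mx Sw big1.
- apply: (recovers_image (f := col_mx 1%:M)) Rd.
  + by move=> x y /eq_col_mx[].
  + move=> S evS; rewrite Pev1 //=; apply/subsetP => _ /imsetP[y _ ->].
    by rewrite !inE col_mxKu mx11_F2_1_neq0.
  + by move=> i S _ evS Sw; rewrite vw sum_col_mx Sw sumr_F2_even.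
Qed.

(* [w] stands for the requests written in coordinates whose first one is [phi],
   with that first coordinate dropped. *)
Lemma recovers_hyperplane k s (P : pred {set 'cV[F2]_(1 + k)}) (Pl : pred {set 'cV[F2]_k})
    (v : 'I_s -> 'cV[F2]_(1 + k)) (phi : 'rV[F2]_(1 + k)) (c d : 'I_s -> nat) :
  (forall (E : 'M_(1 + k)) S, E \in unitmx -> P S -> P (mulmx (invmx E) @: S)) ->
  (forall S, Pl S -> P [set col_mx 0 x | x in S]) ->
  (forall S, even_set S -> P [set col_mx 1%:M x | x in S]) ->
  phi != 0 -> (forall i, phi *m v i = 0) ->
  (forall w : 'I_s -> 'cV[F2]_k,
     (forall i, (w i == 0) = (v i == 0)) -> (forall i j, (w i == w j) = (v i == v j)) ->
     recovers Pl w c /\ recovers (@even_set k) w d) ->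
  recovers P v (fun i => c i + d i)%N.
Proof.
move=> PE Pl0 Pev1 nzphi phiv low; apply: (recovers_top_row PE nzphi) => E uE Ephi.
pose w i := dsubmx (E *m v i).
have Evw i : E *m v i = col_mx 0 (w i) by rewrite -[LHS]vsubmxK Ephi phiv.
have Einj : injective (mulmx E : 'cV[F2]_(1 + k) -> _) := can_inj (mulKmx uE).
have [||Rc Rd] := low w; last exact: recovers_halves Rc Rd.
- by move=> i; rewrite -(inj_eq Einj) mulmx0 Evw -col_mx0 col_mx_eqE eqxx.
- by move=> i j; rewrite -(inj_eq Einj) !Evw col_mx_eqE eqxx.
Qed.

(** * Two requests with even multiplicities *)

Lemma ord2P (i : 'I_2) : i = ord0 \/ i = ord_max.
Proof. by case: i => [[|[|//]]] ?; [left|right]; apply: val_inj. Qed.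

Lemma even_halves (b : 'I_2 -> nat) H : (forall i, ~~ odd (b i)) -> ~~ odd H ->
  (b ord0 + b ord_max = H.*2)%N ->
  exists c : 'I_2 -> nat,
    [/\ forall i, (c i <= b i)%N, forall i, ~~ odd (c i) & (c ord0 + c ord_max = H)%N].
Proof.
move=> evb evH sumb; have ev0 := evb ord0; have ev1 := evb ord_max.
exists (fun i => if i == ord0 then minn (b ord0) H else H - minn (b ord0) H)%N.
split=> [i|i|]; last by rewrite /= subnKC ?geq_minr.
- by case: (ord2P i) => -> /=; lia.
- by case: ifP; lia.
Qed.

Lemma recovers_even_pair k (w : 'I_2 -> 'cV[F2]_(1 + k)) (b : 'I_2 -> nat) :
  (0 < k)%N -> (forall i, w i != 0) -> (forall i, ~~ odd (b i)) ->
  (b ord0 + b ord_max = 2 ^ k)%N -> recovers (@even_set (1 + k)) w b.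
Proof.
elim: k w b => [//|k IH] w b _ nzw evb sumb.
have [k0|k_gt0] := posnP k.
  subst k; have ev0 := evb ord0; have ev1 := evb ord_max.
  have [i0 bi0 b0] : exists2 i0, b i0 = 2%N & forall i, i != i0 -> b i = 0%N.
    have [b00|b0pos] := posnP (b ord0).
      by exists ord_max => [|i]; [lia|case: (ord2P i) => ->; rewrite ?eqxx].
    by exists ord0 => [|i]; [lia|case: (ord2P i) => -> //= _; lia].
  by apply: (recovers_one b0 (t := 2 ^ 1)); rewrite ?bi0 //; apply: recovers_even_single.
have [phi nzphi phiw] : exists2 phi : 'rV_(1 + k.+1), phi != 0 & forall i, phi *m w i = 0.
  by apply: annihilator_of_rank_lt; apply: leq_ltn_trans (rank_leq_col _) _; lia.
have ev2k : ~~ odd (2 ^ k) by rewrite -(prednK k_gt0) expnS; lia.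
have sumb2 : (b ord0 + b ord_max = (2 ^ k).*2)%N by rewrite sumb -mul2n -expnS.
have [c [cb evc sumc]] := even_halves evb ev2k sumb2.
apply: (eq_recovers (a := fun i => c i + (b i - c i))%N) => [i|]; first by rewrite subnKC.
have col_mx_inj (y : 'cV[F2]_1) : injective (@col_mx _ 1 k.+1 1 y) by move=> x z /eq_col_mx[].
apply: (recovers_hyperplane (Pl := @even_set k.+1) (phi := phi)) => // [E S|S|S|w' w'0 _].
- exact: even_set_unitmx.
- by rewrite /even_set card_imset //; apply: col_mx_inj.
- by rewrite /even_set card_imset //; apply: col_mx_inj.
have nzw' i : w' i != 0 by rewrite w'0.
split; first exact: IH.
apply: IH => // [i|]; first by have := evc i; have := evb i; lia.
by have := cb ord0; have := cb ord_max; rewrite expnS in sumb; lia.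
Qed.

(** * Requests forming a basis *)

Definition independent n m (u : 'I_m -> 'cV[F2]_n) :=
  forall e : {set 'I_m}, \sum_(r in e) u r = 0 -> e = set0.

Lemma independent_of_spanning n m (u : 'I_m -> 'cV[F2]_n) : (m <= n)%N ->
  (forall phi : 'rV[F2]_n, phi != 0 -> exists r, phi *m u r != 0) -> independent u.
Proof.
move=> mn span e ue0; apply/eqP; apply: contraT => e_neq0.
have /annihilator_of_rank_lt[phi /span[r phiu] phi_u] :=
  leq_trans (rank_lt_of_dependent e_neq0 ue0) mn.
by rewrite phi_u eqxx in phiu.
Qed.

(* Certificates, checked by computation: a combination of [m] basis vectors is
   a bit list of length [m], and a certificate gives for each request [r < m]
   a list of recovery sets of combinations. *)
Definition xorl (e1 e2 : seq bool) := [seq x.1 (+) x.2 | x <- zip e1 e2].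
Definition xorsum m (g : seq (seq bool)) := foldr xorl (nseq m false) g.
Definition unit_bits m r := mkseq (fun t => t == r) m.

Definition valid_set m r (g : seq (seq bool)) :=
  [&& all (fun e => (size e == m) && has id e) g, xorsum m g == unit_bits m r & uniq g].

Definition cert_positions m (G : nat -> seq (seq (seq bool))) :=
  [seq (r, j) | r <- iota 0 m, j <- iota 0 (size (G r))].

Definition cert_set (G : nat -> seq (seq (seq bool))) (x : nat * nat) := nth [::] (G x.1) x.2.

Definition valid_certificate m (G : nat -> seq (seq (seq bool))) :=
  all (fun r => all (valid_set m r) (G r)) (iota 0 m) &&
  all (fun x => all (fun y => (x == y) || ~~ has (mem (cert_set G y)) (cert_set G x))
                    (cert_positions m G))
      (cert_positions m G).

Lemma size_xorl e1 e2 : size (xorl e1 e2) = minn (size e1) (size e2).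
Proof. by rewrite size_map size_zip. Qed.

Lemma nth_xorl e1 e2 r : size e1 = size e2 ->
  nth false (xorl e1 e2) r = nth false e1 r (+) nth false e2 r.
Proof.
move=> e12; have [lt|le] := ltnP r (size e1).
  by rewrite (nth_map (false, false)) ?nth_zip ?size_zip -?e12 ?minnn.
by rewrite !nth_default ?size_xorl -?e12 ?minnn.
Qed.

Lemma size_xorsum m g : all (fun e => size e == m) g -> size (xorsum m g) = m.
Proof.
elim: g => [|e g IH /= /andP[/eqP se /IH sg]]; first by rewrite size_nseq.
by rewrite size_xorl se sg minnn.
Qed.

Section Certificate.
Variables (n m : nat) (u : 'I_m -> 'cV[F2]_n).
Hypothesis u_indep : independent u.

Definition comb (e : seq bool) := \sum_(r < m | nth false e r) u r.

Lemma comb_xorl e1 e2 : size e1 = m -> size e2 = m ->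
  comb (xorl e1 e2) = comb e1 + comb e2.
Proof.
move=> s1 s2; rewrite /comb !(big_mkcond (fun r : 'I_m => nth false _ r)) -big_split /=.
apply: eq_bigr => r _; rewrite nth_xorl ?s1 ?s2 //.
by case: (nth false e1 r); case: (nth false e2 r); rewrite ?F2mx_addxx ?addr0 ?add0r.
Qed.

Lemma comb_xorsum g :
  all (fun e => size e == m) g -> comb (xorsum m g) = \sum_(e <- g) comb e.
Proof.
elim: g => [_|e g IH /= /andP[/eqP se sg]].
  by rewrite big_nil /comb big1 // => r; rewrite nth_nseq if_same.
by rewrite big_cons comb_xorl ?size_xorsum // IH.
Qed.

Lemma comb_unit_bits (r : 'I_m) : comb (unit_bits m r) = u r.
Proof.
rewrite /comb (eq_bigl (pred1 r)) ?big_pred1_eq // => t.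
by rewrite /= nth_mkseq.
Qed.

Lemma comb_eq0 e : size e = m -> comb e = 0 -> ~~ has id e.
Proof.
have -> : comb e = \sum_(r in [set r : 'I_m | nth false e r]) u r.
  by apply: eq_bigl => r; rewrite inE.
move=> se /u_indep/setP e0; apply/hasPn => b /(nthP false)[t lt <-].
by rewrite se in lt; have := e0 (Ordinal lt); rewrite !inE => ->.
Qed.

Lemma comb_inj e1 e2 : size e1 = m -> size e2 = m -> comb e1 = comb e2 -> e1 = e2.
Proof.
move=> s1 s2 e12; have := comb_eq0 (e := xorl e1 e2).
rewrite size_xorl s1 s2 minnn comb_xorl // e12 F2mx_addxx => /(_ erefl erefl)/hasPn x0.
apply: (@eq_from_nth _ false) => [|t]; rewrite ?s1 ?s2 // => lt.
have := x0 (nth false (xorl e1 e2) t); rewrite mem_nth ?size_xorl ?s1 ?s2 ?minnn //.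
by rewrite nth_xorl ?s1 ?s2 //; do 2!case: (nth false _ t) => //=; move/(_ isT).
Qed.

Lemma recovers_of_certificate G :
  valid_certificate m G -> recovers (@zero_free n) u (fun r => size (G r)).
Proof.
case/andP=> /allP valid /allP disj.
have validG (r : 'I_m) j : (j < size (G r))%N -> valid_set m r (cert_set G (nat_of_ord r, j)).
  have /allP vr : all (valid_set m r) (G r) by apply: valid; rewrite mem_iota add0n ltn_ord.
  by move=> lj; apply/vr/mem_nth.
have posG (r : 'I_m) j : (j < size (G r))%N -> (nat_of_ord r, j) \in cert_positions m G.
  by move=> lj; apply: allpairs_f_dep; rewrite mem_iota add0n /= ?ltn_ord.
exists (fun r j => [set x in map comb (cert_set G (nat_of_ord r, j))]); split.
  move=> r j /validG /and3P[/allP sizes /eqP xr uniq_g].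
  have sz e : e \in cert_set G (nat_of_ord r, j) -> size e = m by case/sizes/andP=> /eqP.
  split.
    rewrite /zero_free inE; apply/mapP => -[e ge /esym e0].
    by have /andP[_] := sizes e ge; move: (comb_eq0 (sz e ge) e0) => /negP.
  rewrite (eq_bigl (mem (map comb (cert_set G (nat_of_ord r, j))))) => [|x]; last by rewrite inE.
  rewrite -big_uniq ?big_map -?comb_xorsum ?xr ?comb_unit_bits //.
    by apply/allP => e /sz ->.
  by rewrite map_inj_in_uniq // => e1 e2 /sz s1 /sz s2; apply: comb_inj.
move=> r r' j j' lj lj' ne.
have /allP/(_ _ (posG r' j' lj')) := disj _ (posG r j lj).
have -> /= : ((nat_of_ord r, j) == (nat_of_ord r', j')) = false.
  by apply: contraNF ne => /eqP[/val_inj -> ->].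
move=> /hasPn no_common; rewrite -setI_eq0; apply/eqP/setP => x; rewrite !inE.
apply/negP => /andP[/mapP[e ge ->] /mapP[e' ge' ee']].
have /validG/and3P[/allP sizes _ _] := lj; have /validG/and3P[/allP sizes' _ _] := lj'.
have /andP[/eqP se _] := sizes e ge; have /andP[/eqP se' _] := sizes' e' ge'.
by have := no_common e ge; rewrite (comb_inj se se' ee') => /negP; apply.
Qed.

End Certificate.

Definition bits m (l : seq nat) : seq bool := mkseq (fun t => t \in l) m.
Definition single_set m r := [:: bits m [:: r]].
Definition pair_set m (l1 l2 : seq nat) := [:: bits m l1; bits m l2].

Definition partition_certificate (cs : seq nat) : nat -> seq (seq (seq bool)) :=
  match cs with
  | [:: 2; 1; 1] => fun r => match r with
    | 0 => [:: single_set 3 0; pair_set 3 [:: 1; 2] [:: 0; 1; 2]]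
    | 1 | 2 => [:: single_set 3 r]
    | _ => [::] end
  | [:: 5; 1; 1; 1] => fun r => match r with
    | 0 => [:: single_set 4 0; pair_set 4 [:: 1; 2] [:: 0; 1; 2];
               pair_set 4 [:: 1; 3] [:: 0; 1; 3]; pair_set 4 [:: 2; 3] [:: 0; 2; 3];
               pair_set 4 [:: 1; 2; 3] [:: 0; 1; 2; 3]]
    | 1 | 2 | 3 => [:: single_set 4 r]
    | _ => [::] end
  | [:: 4; 2; 1; 1] => fun r => match r with
    | 0 => [:: single_set 4 0; pair_set 4 [:: 1; 2] [:: 0; 1; 2];
               pair_set 4 [:: 2; 3] [:: 0; 2; 3]; pair_set 4 [:: 1; 2; 3] [:: 0; 1; 2; 3]]
    | 1 => [:: single_set 4 1; pair_set 4 [:: 0; 3] [:: 0; 1; 3]]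
    | 2 | 3 => [:: single_set 4 r]
    | _ => [::] end
  | [:: 3; 3; 1; 1] => fun r => match r with
    | 0 => [:: single_set 4 0; pair_set 4 [:: 2; 3] [:: 0; 2; 3];
               pair_set 4 [:: 1; 2; 3] [:: 0; 1; 2; 3]]
    | 1 => [:: single_set 4 1; pair_set 4 [:: 0; 2] [:: 0; 1; 2];
               pair_set 4 [:: 0; 3] [:: 0; 1; 3]]
    | 2 | 3 => [:: single_set 4 r]
    | _ => [::] end
  | [:: 3; 2; 2; 1] => fun r => match r with
    | 0 => [:: single_set 4 0; pair_set 4 [:: 1; 2; 3] [:: 0; 1; 2; 3];
               pair_set 4 [:: 2; 3] [:: 0; 2; 3]]
    | 1 => [:: single_set 4 1; pair_set 4 [:: 0; 3] [:: 0; 1; 3]]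
    | 2 => [:: single_set 4 2; pair_set 4 [:: 0; 1] [:: 0; 1; 2]]
    | 3 => [:: single_set 4 3]
    | _ => [::] end
  | [:: 2; 2; 2; 2] => fun r => match r with
    | 0 => [:: single_set 4 0; pair_set 4 [:: 1; 2] [:: 0; 1; 2]]
    | 1 => [:: single_set 4 1; pair_set 4 [:: 2; 3] [:: 1; 2; 3]]
    | 2 => [:: single_set 4 2; pair_set 4 [:: 0; 3] [:: 0; 2; 3]]
    | 3 => [:: single_set 4 3; pair_set 4 [:: 0; 1] [:: 0; 1; 3]]
    | _ => [::] end
  | _ => fun _ => [::]
  end.

Definition small_partitions : seq (seq nat) :=
  [:: [:: 2; 1; 1]; [:: 5; 1; 1; 1]; [:: 4; 2; 1; 1]; [:: 3; 3; 1; 1]; [:: 3; 2; 2; 1];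
      [:: 2; 2; 2; 2]].

Lemma partition_certificates_valid :
  all (fun cs => valid_certificate (size cs) (partition_certificate cs) &&
                 (mkseq (fun r => size (partition_certificate cs r)) (size cs) == cs))
      small_partitions.
Proof. by vm_compute. Qed.

Lemma recovers_small_partition n m (u : 'I_m -> 'cV[F2]_n) cs :
  independent u -> cs \in small_partitions -> size cs = m ->
  recovers (@zero_free n) u (fun r => nth 0%N cs r).
Proof.
move=> u_indep cs_small size_cs; subst m; have := allP partition_certificates_valid _ cs_small.
case/andP=> /(recovers_of_certificate u_indep) Ru /eqP sizes.
apply: eq_recovers Ru => r.
by rewrite -(nth_mkseq 0%N (fun r => size (partition_certificate cs r)) (ltn_ord r)) sizes.
Qed.

Lemma mem_small_partitions cs :
  sorted geq cs -> all (leq 1) cs ->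
  (size cs = 3 /\ sumn cs = 4 \/ size cs = 4 /\ sumn cs = 8)%N ->
  cs \in small_partitions.
Proof.
case: cs => [|c0 [|c1 [|c2 [|c3 [|c4 cs]]]]] /=; try lia.
  move=> /and3P[h1 h2 _] /and4P[p0 p1 p2 _] [[_ s]|[//]].
  by have [-> [-> ->]] : (c0 = 2 /\ c1 = 1 /\ c2 = 1)%N by lia.
move=> /and4P[h1 h2 h3 _] /and5P[p0 p1 p2 p3 _] [[//]|[_ s]].
have [c0E [c1b [c2b c3b]]] :
  c0 = (8 - (c1 + c2 + c3))%N /\ (c1 <= 3)%N /\ (c2 <= 2)%N /\ (c3 <= 2)%N by lia.
subst c0; move: h1 h2 h3 p0 p1 p2 p3 c1b c2b c3b s.
case: c1 => [|[|[|[|//]]]]; case: c2 => [|[|[|//]]]; case: c3 => [|[|[|//]]] //; lia.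
Qed.

(** * Normalising the requests *)

Section Reindexing.
Variables (n : nat) (P : pred {set 'cV[F2]_n}).

Lemma recovers_perm s (v : 'I_s -> 'cV[F2]_n) (a : 'I_s -> nat) (L : seq 'I_s) i0 :
  perm_eq L (enum 'I_s) ->
  recovers P (fun r : 'I_s => v (nth i0 L r)) (fun r => a (nth i0 L r)) -> recovers P v a.
Proof.
move=> pL; have sL : size L = s by rewrite (perm_size pL) size_enum_ord.
have uL : uniq L by rewrite (perm_uniq pL) enum_uniq.
have iL i : i \in L by rewrite (perm_mem pL) mem_enum.
have idx i : (index i L < s)%N by move: (iL i); rewrite -index_mem sL.
apply: (recovers_pullback (h := fun i => Ordinal (idx i))) => [i _|r] /=.
  by rewrite nth_index.
rewrite (big_pred1 (nth i0 L r)) // => i /=; apply/eqP/eqP => [/(congr1 val) /= <-|->].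
  by rewrite nth_index.
by apply: val_inj; rewrite /= index_uniq ?sL.
Qed.

Lemma recovers_on_pair s (w : 'I_s -> 'cV[F2]_n) p q (bp bq : nat) : p != q ->
  recovers P (fun x : 'I_2 => w (if x == ord0 then p else q))
    (fun x => if x == ord0 then bp else bq) ->
  recovers P w (fun i => if i == p then bp else if i == q then bq else 0)%N.
Proof.
move=> pq; apply: (recovers_pullback (h := fun i => if i == p then ord0 else ord_max)).
  by move=> i; have [->|ip] := eqVneq i p; rewrite ?eqxx //=; case: eqP => [->|].
move=> x; case: (ord2P x) => -> /=.
  by rewrite (big_pred1 p) => [|i /=]; [rewrite eqxx | case: (i == p)].
have qp : (q == p) = false by rewrite eq_sym (negbTE pq).
rewrite (bigD1 q) /= qp //.
rewrite eqxx big1 ?addn0 // => i.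
by case: (i == p) => //= /negbTE->.
Qed.

(* Merging equal requests and dropping those of multiplicity zero. *)
Lemma recovers_distinct s (v : 'I_s -> 'cV[F2]_n) (a : 'I_s -> nat) :
  (0 < \sum_i a i)%N ->
  (forall s' (v' : 'I_s' -> 'cV[F2]_n) (a' : 'I_s' -> nat),
     (s' <= s)%N -> injective v' -> (forall r, 0 < a' r)%N ->
     (forall r, exists2 i, 0 < a i & v' r = v i)%N -> (\sum_r a' r = \sum_i a i)%N ->
     recovers P v' a') ->
  recovers P v a.
Proof.
move=> sum_pos distinct.
pose U := undup [seq v i | i <- enum 'I_s & (0 < a i)%N].
have memU i : (0 < a i)%N -> v i \in U.
  by move=> ai; rewrite mem_undup map_f // mem_filter ai mem_enum.
have memU' x : x \in U -> exists2 i, (0 < a i)%N & x = v i.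
  by rewrite mem_undup => /mapP[i]; rewrite mem_filter => /andP[ai _] ->; exists i.
have [i0 ai0] : exists i, (0 < a i)%N.
  apply/existsP; move: sum_pos; apply: contraLR; rewrite negb_exists => /forallP a0.
  by rewrite -leqNgt leqn0 sum_nat_eq0; apply/forallP => i; rewrite -leqn0 leqNgt a0.
have U_gt0 : (0 < size U)%N.
  by apply: leq_ltn_trans (leq0n (index (v i0) U)) _; rewrite index_mem memU.
pose h i : 'I_(size U) := insubd (Ordinal U_gt0) (index (v i) U).
have val_h i : (0 < a i)%N -> val (h i) = index (v i) U.
  by move=> ai; rewrite val_insubd index_mem memU.
pose v' (r : 'I_(size U)) := nth 0 U r.
pose a' (r : 'I_(size U)) := (\sum_(i | h i == r) a i)%N.
apply: (recovers_pullback (v' := v') (a' := a') (h := h)) => // [i ai|].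
  by rewrite /v' val_h // nth_index ?memU.
have sv r : exists2 i, (0 < a i)%N & v' r = v i /\ h i = r.
  have [i ai vi] := memU' _ (mem_nth 0 (ltn_ord r)); exists i => //; split => //.
  by apply: val_inj; rewrite val_h // -vi index_uniq ?undup_uniq.
apply: distinct.
- rewrite (leq_trans (size_undup _)) // size_map size_filter.
  by rewrite (leq_trans (count_size _ _)) ?size_enum_ord.
- by move=> r r' /eqP; rewrite nth_uniq ?undup_uniq // => /eqP/val_inj.
- by move=> r; have [i ai [_ hi]] := sv r; rewrite /a' (bigD1 i) ?hi //= ltn_addr.
- by move=> r; have [i ai [vi _]] := sv r; exists i.
- by rewrite [RHS](partition_big h xpredT).
Qed.

End Reindexing.

Lemma two_largest_split k (ap aq R : nat) :
  (aq <= ap)%N -> (R <= aq.*2)%N -> (2 <= ap)%N -> (0 < aq)%N ->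
  (ap + aq + R = 2 ^ k.+1)%N ->
  exists bp bq, [/\ bp <= ap, bq <= aq, ~~ odd bp, ~~ odd bq & bp + bq = 2 ^ k]%N.
Proof.
move=> qp Rq p2 q0; case: k => [|[|k]]; rewrite ?expnS ?expn0 => sum_a; first lia.
  by exists 2%N, 0%N; split; lia.
set T := (2 * (2 * 2 ^ k))%N.
by exists (minn (ap - odd ap) T), (T - minn (ap - odd ap) T)%N; split; lia.
Qed.

Lemma card_ord_neq2 s (p q : 'I_s) : p != q -> #|[pred i | (i != p) && (i != q)]| = (s - 2)%N.
Proof.
move=> pq; have := cardD1 p (predT : pred 'I_s); have := cardD1 q [predD1 predT & p].
rewrite !inE eq_sym pq card_ord /=.
have -> : #|[pred i | (i != p) && (i != q)]| = #|[predD1 [predD1 predT & p] & q]|.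
  by apply: eq_card => i; rewrite !inE andbC andbT.
move: #|[predD1 [predD1 predT & p] & q]| #|[predD1 predT & p]| => Y X; lia.
Qed.

Lemma two_largest_cover s (a : 'I_s -> nat) k :
  (s <= 4)%N -> (1 < s)%N -> (forall i, 0 < a i)%N -> (exists i, 2 <= a i)%N ->
  (\sum_i a i = 2 ^ k.+1)%N ->
  exists p q bp bq, p != q /\ [/\ bp <= a p, bq <= a q, ~~ odd bp, ~~ odd bq & bp + bq = 2 ^ k]%N.
Proof.
move=> s4 s1 apos [i2 ai2] sum_a.
have [p _ pmax] := @arg_maxnP _ i2 xpredT a isT.
have [j jp] : exists j : 'I_s, j != p.
  pose o0 : 'I_s := Ordinal (ltnW s1); pose o1 : 'I_s := Ordinal s1.
  have [e|] := eqVneq o0 p; last by exists o0.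
  by exists o1; rewrite -e -val_eqE.
have [q qp qmax] := @arg_maxnP _ j (fun i => i != p) a jp.
pose R := (\sum_(i | (i != p) && (i != q)) a i)%N.
have Rq : (R <= (a q).*2)%N.
  have : (R <= \sum_(i | (i != p) && (i != q)) a q)%N.
    by apply: leq_sum => i /andP[ip _]; apply: qmax.
  rewrite sum_nat_const card_ord_neq2 1?eq_sym // => /leq_trans; apply.
  by rewrite -mul2n leq_mul2r; lia.
have sum3 : (a p + a q + R = 2 ^ k.+1)%N by rewrite -sum_a (bigD1 p) // (bigD1 q) //= addnA.
have [bp [bq [bpa bqa evp evq sumb]]] :=
  two_largest_split (pmax q isT) Rq (leq_trans ai2 (pmax i2 isT)) (apos q) sum3.
by exists p, q, bp, bq; rewrite eq_sym.
Qed.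

Lemma recovers_singletons n s (v : 'I_s -> 'cV[F2]_n) (a : 'I_s -> nat) :
  injective v -> (forall i, v i != 0) -> (forall i, a i <= 1)%N ->
  recovers (@zero_free n) v a.
Proof.
move=> vinj nzv a1; exists (fun i _ => [set v i]); split.
  by move=> i j _; rewrite big_set1 /zero_free inE eq_sym nzv.
move=> i i' j j' lj lj' ne; rewrite disjoints1 inE (inj_eq vinj).
by apply: contraNneq ne => ->; have := a1 i; have := a1 i'; rewrite xpair_eqE eqxx /=; lia.
Qed.

Lemma recovers_kernel_case k s (v : 'I_s -> 'cV[F2]_(1 + k.+1)) (a : 'I_s -> nat)
    (phi : 'rV[F2]_(1 + k.+1)) :
  (forall s (w : 'I_s -> 'cV[F2]_(1 + k)) (c : 'I_s -> nat), (s <= 4)%N ->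
     (forall i, (0 < c i)%N -> w i != 0) -> (\sum_i c i = 2 ^ k)%N ->
     recovers (@zero_free _) w c) ->
  (s <= 4)%N -> (1 < s)%N -> (forall i, v i != 0) -> (forall i, 0 < a i)%N ->
  (exists i, 2 <= a i)%N -> (\sum_i a i = 2 ^ k.+1)%N ->
  phi != 0 -> (forall i, phi *m v i = 0) -> recovers (@zero_free _) v a.
Proof.
move=> IH s4 s1 nzv apos a2 sum_a nzphi phiv.
have [p [q [bp [bq [pq [bpa bqa evp evq sumb]]]]]] := two_largest_cover s4 s1 apos a2 sum_a.
have k_gt0 : (0 < k)%N by case: k {IH v phi nzv phiv nzphi sum_a} sumb => //; lia.
pose b i := if i == p then bp else if i == q then bq else 0%N.
have ba i : (b i <= a i)%N by rewrite /b; case: eqP => [->|_] //; case: eqP => [->|].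
have sum_b : (\sum_i b i = 2 ^ k)%N.
  rewrite (bigD1 p) // (bigD1 q) /=; last by rewrite eq_sym.
  rewrite big1 => [|i /andP[/negbTE ip /negbTE iq]]; last by rewrite /b ip iq.
  by rewrite /b eqxx eq_sym (negbTE pq) eqxx addn0.
apply: (eq_recovers (a := fun i => a i - b i + b i)%N) => [i|]; first by rewrite subnK.
apply: (recovers_hyperplane (Pl := @zero_free (1 + k)) (phi := phi)) => // [E S|S|S _|w w0 _].
- exact: zero_free_unitmx.
- exact: zero_free_col_mx0.
- exact: zero_free_col_mx1.
have nzw i : w i != 0 by rewrite w0.
split.
  apply: IH => //.
  rewrite sumnB ?sum_b ?sum_a => [|i _]; last exact: ba.
  by rewrite expnS mul2n -addnn addnK.
by apply: recovers_on_pair => //; apply: recovers_even_pair => // x; case: (x == ord0).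
Qed.

Lemma small_spanning_dims k s :
  (1 + k <= s)%N -> (s <= 4)%N -> (s < 2 ^ k)%N ->
  (s = 1 + k /\ (s = 3 /\ 2 ^ k = 4 \/ s = 4 /\ 2 ^ k = 8))%N.
Proof. by case: k => [|[|[|[|k]]]] /=; rewrite ?expnS; lia. Qed.

Lemma recovers_spanning_case k s (v : 'I_s -> 'cV[F2]_(1 + k)) (a : 'I_s -> nat) :
  (s <= 4)%N -> (forall i, 0 < a i)%N -> (exists i, 2 <= a i)%N -> (\sum_i a i = 2 ^ k)%N ->
  (forall phi : 'rV_(1 + k), phi != 0 -> exists i, phi *m v i != 0) ->
  recovers (@zero_free _) v a.
Proof.
move=> s4 apos [i0 ai0] sum_a span.
have rank_v : (1 + k <= \rank (cols_mx v))%N.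
  rewrite leqNgt; apply/negP => /annihilator_of_rank_lt[phi /span[i phiv] phi0].
  by rewrite phi0 eqxx in phiv.
have s_lt : (s < 2 ^ k)%N.
  have : (\sum_(i < s) 1 < \sum_i a i)%N.
    rewrite (bigD1 i0) //= [X in (_ < X)%N](bigD1 i0) //=.
    by rewrite -addSn leq_add // leq_sum.
  by rewrite sum1_card card_ord sum_a.
have [s_eq pow_k] := small_spanning_dims (leq_trans rank_v (rank_leq_col _)) s4 s_lt.
pose L := sort (fun i j => a j <= a i)%N (enum 'I_s).
have pL : perm_eq L (enum 'I_s) by rewrite perm_sort.
have sL : size L = s by rewrite size_sort size_enum_ord.
apply: (recovers_perm (i0 := i0) pL).
apply: (eq_recovers (a := fun r => nth 0%N (map a L) r)) => [r|]; first by rewrite (nth_map i0) ?sL.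
apply: recovers_small_partition; rewrite ?size_map //.
  apply: independent_of_spanning => [|phi /span[i phiu]]; first by rewrite s_eq.
  have iL : i \in L by rewrite (perm_mem pL) mem_enum.
  have idx : (index i L < s)%N by move: iL; rewrite -index_mem sL.
  by exists (Ordinal idx); rewrite /= nth_index.
apply: mem_small_partitions.
- by rewrite sorted_map; apply: sort_sorted => i j; apply: leq_total.
- by apply/allP => _ /mapP[i _ ->]; apply: apos.
rewrite size_map sL sumnE big_map (perm_big _ pL) big_enum /= sum_a; lia.
Qed.

Lemma recovers_zero_free k s (v : 'I_s -> 'cV[F2]_(1 + k)) (a : 'I_s -> nat) :
  (s <= 4)%N -> (forall i, (0 < a i)%N -> v i != 0) -> (\sum_i a i = 2 ^ k)%N ->
  recovers (@zero_free _) v a.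
Proof.
elim: k s v a => [|k IH] s v a s4 nzv sum_a;
  apply: recovers_distinct => [|s' v' a' s's v'inj a'pos v'v sum_a']; rewrite ?sum_a ?expn_gt0 //;
  have nzv' r : v' r != 0 by have [i ai ->] := v'v r; apply: nzv.
  apply: recovers_singletons => // r; move: sum_a'; rewrite sum_a expn0 (bigD1 r) //=; lia.
have [a'1|] := boolP [forall r, a' r <= 1]%N; first exact/recovers_singletons/forallP.
rewrite negb_forall => /existsP[r]; rewrite -ltnNge => a'r.
have [s'1|s'2] := leqP s' 1.
  apply: (recovers_one (i0 := r) (t := (2 ^ k.+1)%N)); last exact: recovers_zero_free_single.
    move=> i ir; case/negP: ir; apply/eqP/val_inj => /=; move: (ltn_ord i) (ltn_ord r); lia.
  by rewrite -sum_a -sum_a' (bigD1 r) //= leq_addr.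
have [kernel|span] := boolP [exists phi : 'rV[F2]_(1 + k.+1),
  (phi != 0) && [forall i, phi *m v' i == 0]].
  have /existsP[phi /andP[nzphi /forallP phiv]] := kernel.
  apply: (recovers_kernel_case IH (phi := phi)) => //; first exact: leq_trans s's s4.
  - by exists r.
  - by rewrite sum_a' sum_a.
  - by move=> i; apply/eqP.
apply: recovers_spanning_case; rewrite ?sum_a' //; first exact: leq_trans s's s4.
  by exists r.
move=> phi nzphi; move: span; rewrite negb_exists => /forallP/(_ phi).
by rewrite nzphi negb_forall => /existsP[i phiv]; exists i.
Qed.

Lemma simplex_columns n N (G : 'M[F2]_(n, N)) :
  is_simplex_generator G -> [set col l G | l in 'I_N] = [set x | x != 0].
Proof.
case=> N_eq [nz_col col_inj]; apply/eqP; rewrite eqEcard; apply/andP; split.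
  by apply/subsetP => _ /imsetP[l _ ->]; rewrite inE nz_col.
rewrite card_imset // card_ord N_eq.
have -> : [set x : 'cV[F2]_n | x != 0] = [set~ 0] by apply/setP => x; rewrite !inE.
by rewrite cardsC1 card_cV_F2 subn1.
Qed.

Lemma batch_code_of_recovers n N (G : 'M[F2]_(n, N)) s t :
  is_simplex_generator G ->
  (forall (v : 'I_s -> 'cV[F2]_n) (a : 'I_s -> nat), (forall i, v i != 0) ->
     (forall i, 0 < a i)%N -> (\sum_i a i = t)%N -> recovers (@zero_free n) v a) ->
  functional_batch_code G s t.
Proof.
move=> simplexG recov v a nzv apos sum_a.
have [R [RP Rd]] := recov v a nzv apos sum_a.
have col_inj : injective (fun l => col l G) by case: simplexG => _ [].
have cols := simplex_columns simplexG.
exists (fun i j => [set l | col l G \in R i j]); split=> [i j lj|i i' j j' lj lj' ne].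
  have [zfR <-] := RP i j lj.
  rewrite -(big_imset (fun x => x) (h := fun l => col l G)) => [|l l' _ _]; last exact: col_inj.
  apply: eq_bigl => x; apply/imsetP/idP => [[l]|xR]; first by rewrite inE => lR ->.
  have : x \in [set x | x != 0] by rewrite inE; apply: contraNneq zfR => <-.
  by rewrite -cols => /imsetP[l _ xl]; exists l; rewrite // inE -xl.
rewrite -setI_eq0; apply/eqP/setP => l; rewrite !inE.
by apply/negbTE/negP => /andP[lR]; rewrite (disjointFr (Rd _ _ _ _ lj lj' ne) lR).
Qed.

Theorem mainTheorem12 (n N : nat) (G : 'M['F_2]_(n, N)) :
  (1 <= n)%N ->
  is_simplex_generator G ->
  forall s : nat, (1 <= s)%N -> (s <= minn 4 (2 ^ n.-1))%N ->
    functional_batch_code G s (2 ^ n.-1).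
Proof.
case: n G => [//|k] G _ simplexG s _; rewrite leq_min => /andP[s4 _].
apply: batch_code_of_recovers => // v a nzv _ sum_a.
exact: recovers_zero_free.
Qed.
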